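(* For every $\mathbf y\in\mathbb{R}^3$ and every integer $l\ge0$ there is a vector $Q^l(\mathbf y)=(Q^l_m(\mathbf y))_{m=-l}^{l}\in\mathbb{C}^{2l+1}$ of Euclidean norm $1$ such that, for every $\mathbf x\in\mathbb{R}^3$ with spherical coordinates $(R,\theta,\phi)$ and $R>r:=\|\mathbf y\|$, $$\log\|\mathbf x-\mathbf y\|=\log R-\sum_{n=1}^\infty\frac{a_n}{R^n}\sum_{l=0}^nL_{nl}\sqrt{\frac{4\pi}{2l+1}}\sum_{m=-l}^{l}Q^l_m(\mathbf y)\,Y_l^m(\theta,\phi),\qquad a_n=\frac{r^n}{n}.$$
   Context: Spherical coordinates $(R,\theta,\phi)$ are centered at the origin, with $\theta\in[0,\pi]$ the polar angle and $\phi\in[0,2\pi)$. The spherical harmonics are $Y_l^m(\theta,\phi)=\sqrt{\frac{2l+1}{4\pi}\frac{(l-|m|)!}{(l+|m|)!}}\,P_l^{|m|}(\cos\theta)e^{im\phi}$ for $l\ge0$, $-l\le m\le l$, where $P_n^m(x)=(-1)^m(1-x^2)^{m/2}\frac{d^m}{dx^m}P_n(x)$ and $P_n$ is the Legendre polynomial of degree $n$. With $\Lambda(z)=\frac{\Gamma(z+1/2)}{\Gamma(z+1)}$, the coefficients $L_{nl}$ ($0\le l\le n$) are $L_{nl}=1$ if $n=l=0$; $L_{nl}=\frac{\sqrt\pi}{2\Lambda(n)}$ if $n=l>0$; $L_{nl}=\frac{-n(l+1/2)}{(n+l+1)(n-l)}\Lambda\!\left(\frac{n-l-2}{2}\right)\Lambda\!\left(\frac{n+l-1}{2}\right)$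 if $n>l$ and $n+l$ is even; $L_{nl}=0$ otherwise. (These are the coefficients of the Chebyshev polynomial $T_n$ in the Legendre basis: $T_n=\sum_{l=0}^nL_{nl}P_l$.) *)

From Stdlib Require Import Reals ZArith.
From Coquelicot Require Import Coquelicot.
Open Scope R_scope.

(* Legendre polynomials, Bonnet recurrence:
   P_0 = 1, P_1 = x, (n+2) P_{n+2} = (2n+3) x P_{n+1} - (n+1) P_n. *)
Fixpoint legendre_pair (n : nat) (x : R) : R * R :=
  match n with
  | O => (1, x)
  | S k => let (p, q) := legendre_pair k x in
           (q, ((2 * INR k + 3) * x * q - (INR k + 1) * p) / (INR k + 2))
  end.
Definition Legendre (n : nat) (x : R) : R := fst (legendre_pair n x).

Definition assocLegendre (n m : nat) (x : R) : R :=
  (-1) ^ m * (sqrt (1 - x ^ 2)) ^ m * Derive_n (Legendre n) m x.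

Definition Ylm (l : nat) (m : Z) (theta phi : R) : C :=
  let am := Z.abs_nat m in
  Cmult (RtoC (sqrt ((2 * INR l + 1) / (4 * PI) * (INR (fact (l - am)) / INR (fact (l + am))))
               * assocLegendre l am (cos theta)))
        (cos (IZR m * phi), sin (IZR m * phi)).

(* Gamma at positive half-integers: GammaHalf j = Gamma(j/2) for j >= 1,
   via Gamma(1/2) = sqrt pi, Gamma(1) = 1, Gamma(z+1) = z Gamma(z). *)
Fixpoint GammaHalf (j : nat) : R :=
  match j with
  | O => 0 (* unused: Gamma has a pole at 0 *)
  | 1%nat => sqrt PI
  | 2%nat => 1
  | S (S k as j') => (INR k / 2) * GammaHalf k
  end.

(* LambdaHalf j = Lambda(j/2) = Gamma(j/2 + 1/2) / Gamma(j/2 + 1). *)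
Definition LambdaHalf (j : nat) : R := GammaHalf (S j) / GammaHalf (S (S j)).

(* Coefficients L_{nl} of T_n in the Legendre basis. *)
Definition Lcoef (n l : nat) : R :=
  if (Nat.eqb n 0 && Nat.eqb l 0)%bool then 1
  else if Nat.eqb n l then sqrt PI / (2 * LambdaHalf (2 * n))
  else if (Nat.ltb l n && Nat.even (n + l))%bool then
    (- INR n * (INR l + / 2)) / ((INR n + INR l + 1) * (INR n - INR l))
    * LambdaHalf (n - l - 2) * LambdaHalf (n + l - 1)
  else 0.

Definition sph (Rr theta phi : R) : R * R * R :=
  (Rr * sin theta * cos phi, Rr * sin theta * sin phi, Rr * cos theta).

Definition norm3 (v : R * R * R) : R :=
  let '(a, b, c) := v in sqrt (a ^ 2 + b ^ 2 + c ^ 2).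

Definition sub3 (v w : R * R * R) : R * R * R :=
  let '(a, b, c) := v in let '(d, e, f) := w in (a - d, b - e, c - f).

Definition sum_m (l : nat) (f : Z -> C) : C :=
  sum_n (fun k : nat => f (Z.of_nat k - Z.of_nat l)%Z) (2 * l).

From Stdlib Require Import Reals ZArith Lra Lia.
From Coquelicot Require Import Coquelicot.
Open Scope R_scope.

(* Write x = R u and y = r v with unit vectors u, v, let cos g = u.v and t = r/R < 1.
   Then ln R - ln |x - y| = -1/2 ln (1 - 2 t cos g + t^2), and the generating function
   -1/2 ln (1 - 2 t c + t^2) = sum_n T_n(c) t^n / n of the Chebyshev polynomials (a consequence
   of T_n(cos a) = cos (n a)) expands it in powers of t.  Writing T_n = sum_l L_nl P_l and
   expanding P_l(cos g) by the addition theorem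
   P_l(cos g) = 4 pi / (2l+1) sum_m conj (Y_l^m(v)) Y_l^m(u)
   gives the formula with Q^l_m = sqrt (4 pi / (2l+1)) conj (Y_l^m(v)); at u = v the addition
   theorem shows that |Q^l|^2 = P_l(1) = 1.  The addition theorem is proved by induction on l:
   both sides satisfy Bonnet's recurrence, by the recurrences relating the derivatives of
   consecutive Legendre polynomials. *)

Lemma nat_ind2 (P : nat -> Prop) :
  P 0%nat -> P 1%nat -> (forall n, P n -> P (S n) -> P (S (S n))) -> forall n, P n.
Proof. apply Nat.pair_induction. now intros ? ? ->. Qed.

Lemma sum_Sn_R (f : nat -> R) n : sum_n f (S n) = sum_n f n + f (S n).
Proof. exact (sum_Sn f n). Qed.

Lemma is_derive_comb (f g h : R -> R) f' g' h' a b c x :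
  is_derive f x f' -> is_derive g x g' -> is_derive h x h' ->
  is_derive (fun t => a * (t * f t) + b * g t + c * h t) x
    (a * (f x + x * f') + b * g' + c * h').
Proof.
  intros Hf Hg Hh.
  pose proof (is_derive_unique _ _ _ Hf) as Df.
  pose proof (is_derive_unique _ _ _ Hg) as Dg.
  pose proof (is_derive_unique _ _ _ Hh) as Dh.
  auto_derive.
  - repeat split; eexists; eassumption.
  - change (Derive (fun t => f t) x) with (Derive f x).
    change (Derive (fun t => g t) x) with (Derive g x).
    change (Derive (fun t => h t) x) with (Derive h x).
    rewrite Df, Dg, Dh. ring.
Qed.

Lemma is_derive_null_fun (F F' : R -> R) :
  (forall x, F x = 0) -> (forall x, is_derive F x (F' x)) -> forall x, F' x = 0.
Proof.
  intros H0 HD x. rewrite <- (is_derive_unique _ _ _ (HD x)).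
  rewrite (Derive_ext F (fun _ => 0) x H0). apply Derive_const.
Qed.

(** * Derivatives of Legendre polynomials *)

Lemma Legendre_0 x : Legendre 0 x = 1.
Proof. reflexivity. Qed.

Lemma Legendre_1 x : Legendre 1 x = x.
Proof. reflexivity. Qed.

Lemma Legendre_SS k x : Legendre (S (S k)) x =
  ((2 * INR k + 3) * x * Legendre (S k) x - (INR k + 1) * Legendre k x) / (INR k + 2).
Proof. unfold Legendre. simpl. now destruct (legendre_pair k x). Qed.

Lemma Legendre_at_1 l : Legendre l 1 = 1.
Proof.
  induction l as [| |l IH0 IH1] using nat_ind2; [reflexivity|reflexivity|].
  rewrite Legendre_SS, IH0, IH1. pose proof (pos_INR l). field. lra.
Qed.

(* The m-th derivatives of P_l and P_{l+1}, from Bonnet's recurrence differentiated m times. *)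
Fixpoint LegendreD_pair (l : nat) : (nat -> R -> R) * (nat -> R -> R) :=
  match l with
  | O => (fun m x => match m with O => 1 | _ => 0 end,
          fun m x => match m with O => x | 1%nat => 1 | _ => 0 end)
  | S k => let (p, q) := LegendreD_pair k in
     (q, fun m x => ((2 * INR k + 3) * (x * q m x + INR m * q (pred m) x)
                     - (INR k + 1) * p m x) / (INR k + 2))
  end.
Definition LegendreD (l m : nat) (x : R) : R := fst (LegendreD_pair l) m x.

Lemma LegendreD_SS k m x : LegendreD (S (S k)) m x =
  ((2 * INR k + 3) * (x * LegendreD (S k) m x + INR m * LegendreD (S k) (pred m) x)
   - (INR k + 1) * LegendreD k m x) / (INR k + 2).
Proof. unfold LegendreD. simpl. now destruct (LegendreD_pair k). Qed.

Lemma LegendreD_O l x : LegendreD l 0 x = Legendre l x.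
Proof.
  induction l as [| |l IH0 IH1] using nat_ind2; [reflexivity|reflexivity|].
  rewrite LegendreD_SS, Legendre_SS, IH0, IH1. simpl. field.
  pose proof (pos_INR l). lra.
Qed.

Lemma is_derive_LegendreD l : forall m x, is_derive (LegendreD l m) x (LegendreD l (S m) x).
Proof.
  induction l as [| |l IH0 IH1] using nat_ind2; intros m x.
  - destruct m; unfold LegendreD; simpl; exact (is_derive_const _ _).
  - destruct m as [|[|m]]; unfold LegendreD; simpl;
      [exact (is_derive_id _) | exact (is_derive_const _ _) | exact (is_derive_const _ _)].
  - pose proof (pos_INR l).
    set (a := (2 * INR l + 3) / (INR l + 2)).
    set (b := (2 * INR l + 3) * INR m / (INR l + 2)).
    set (c := - (INR l + 1) / (INR l + 2)).
    assert (E : forall t, a * (t * LegendreD (S l) m t) + b * LegendreD (S l) (pred m) t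
                          + c * LegendreD l m t = LegendreD (S (S l)) m t).
    { intros t. rewrite LegendreD_SS. unfold a, b, c. field. lra. }
    apply (is_derive_ext _ _ _ _ E).
    replace (LegendreD (S (S l)) (S m) x) with
      (a * (LegendreD (S l) m x + x * LegendreD (S l) (S m) x)
       + b * LegendreD (S l) (S (pred m)) x + c * LegendreD l (S m) x).
    { apply is_derive_comb; auto. }
    rewrite LegendreD_SS. unfold a, b, c.
    destruct m; simpl pred; rewrite ?S_INR; simpl INR; field; lra.
Qed.

Lemma Derive_n_Legendre l m x : Derive_n (Legendre l) m x = LegendreD l m x.
Proof.
  revert x. induction m as [|m IH]; intros x.
  - symmetry. apply LegendreD_O.
  - simpl. rewrite (Derive_ext _ (LegendreD l m) x IH).
    apply is_derive_unique, is_derive_LegendreD.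
Qed.

Lemma LegendreD_gt l m x : (l < m)%nat -> LegendreD l m x = 0.
Proof.
  revert m. induction l as [| |l IH0 IH1] using nat_ind2; intros m Hm.
  - destruct m; [lia|reflexivity].
  - destruct m as [|[|m]]; [lia|lia|reflexivity].
  - rewrite LegendreD_SS, IH0, IH1, IH1 by lia. field. pose proof (pos_INR l); lra.
Qed.

Lemma LegendreD_S_updown_O l x :
  LegendreD (S l) 1 x = x * LegendreD l 1 x + (INR l + 1) * LegendreD l 0 x /\
  LegendreD l 1 x = x * LegendreD (S l) 1 x - (INR l + 1) * LegendreD (S l) 0 x.
Proof.
  revert x. induction l as [|l IH]; intros x.
  - unfold LegendreD. simpl. split; ring.
  - destruct (IH x) as [Hup Hdown]. pose proof (pos_INR l).
    assert (Hup' : LegendreD (S (S l)) 1 x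
                   = x * LegendreD (S l) 1 x + (INR (S l) + 1) * LegendreD (S l) 0 x).
    { rewrite LegendreD_SS. simpl pred. change (INR 1) with 1.
      rewrite Hdown, S_INR. field. lra. }
    split; [exact Hup'|].
    rewrite Hup', LegendreD_SS. simpl pred. change (INR 1) with 1.
    rewrite Hup at 1. rewrite Hdown at 1. rewrite S_INR. change (INR 0) with 0. field. lra.
Qed.

(* Both recurrences below are obtained from their m = 0 case by differentiating m times. *)
Lemma LegendreD_S_up l m x :
  LegendreD (S l) (S m) x = x * LegendreD l (S m) x + (INR l + INR m + 1) * LegendreD l m x.
Proof.
  revert x. induction m as [|m IH]; intros x.
  - rewrite (proj1 (LegendreD_S_updown_O l x)). simpl. ring.
  - assert (H := is_derive_null_fun
      (fun t => (-1) * (t * LegendreD l (S m) t) + 1 * LegendreD (S l) (S m) t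
                + (- (INR l + INR m + 1)) * LegendreD l m t)
      (fun t => (-1) * (LegendreD l (S m) t + t * LegendreD l (S (S m)) t)
                + 1 * LegendreD (S l) (S (S m)) t + (- (INR l + INR m + 1)) * LegendreD l (S m) t)
      (fun t => ltac:(cbv beta; rewrite IH; ring))
      (fun t => is_derive_comb _ _ _ _ _ _ _ _ _ t
                  (is_derive_LegendreD _ _ _) (is_derive_LegendreD _ _ _) (is_derive_LegendreD _ _ _))
      x).
    rewrite S_INR. simpl in H. lra.
Qed.

Lemma LegendreD_S_down l m x :
  LegendreD l (S m) x = x * LegendreD (S l) (S m) x - (INR l + 1 - INR m) * LegendreD (S l) m x.
Proof.
  revert x. induction m as [|m IH]; intros x.
  - rewrite (proj2 (LegendreD_S_updown_O l x)). simpl. ring.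
  - assert (H := is_derive_null_fun
      (fun t => (-1) * (t * LegendreD (S l) (S m) t) + 1 * LegendreD l (S m) t
                + (INR l + 1 - INR m) * LegendreD (S l) m t)
      (fun t => (-1) * (LegendreD (S l) (S m) t + t * LegendreD (S l) (S (S m)) t)
                + 1 * LegendreD l (S (S m)) t + (INR l + 1 - INR m) * LegendreD (S l) (S m) t)
      (fun t => ltac:(cbv beta; rewrite IH; ring))
      (fun t => is_derive_comb _ _ _ _ _ _ _ _ _ t
                  (is_derive_LegendreD _ _ _) (is_derive_LegendreD _ _ _) (is_derive_LegendreD _ _ _))
      x).
    rewrite S_INR. simpl in H. lra.
Qed.

Lemma LegendreD_ode l m x :
  (1 - x ^ 2) * LegendreD l (S (S m)) x
  = 2 * INR (S m) * x * LegendreD l (S m) x - (INR l - INR m) * (INR l + INR m + 1) * LegendreD l m x.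
Proof.
  destruct l as [|l].
  - unfold LegendreD. destruct m; simpl; ring.
  - pose proof (LegendreD_S_down l (S m) x) as Hdown1.
    pose proof (LegendreD_S_up l (S m) x) as Hup.
    pose proof (LegendreD_S_down l m x) as Hdown0.
    rewrite Hdown1, Hdown0 in Hup. rewrite !S_INR in *. nra.
Qed.

Lemma LegendreD_1_S l x :
  (1 - x ^ 2) * LegendreD (S l) 1 x = (INR l + 1) * (LegendreD l 0 x - x * LegendreD (S l) 0 x).
Proof.
  pose proof (LegendreD_S_up l 0 x) as Hup. rewrite (LegendreD_S_down l 0 x) in Hup.
  simpl in *. nra.
Qed.

Lemma LegendreD_pred_diag l x : LegendreD (S l) l x = x * LegendreD (S l) (S l) x.
Proof.
  pose proof (LegendreD_ode (S l) l x) as H.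
  rewrite (LegendreD_gt (S l) (S (S l))) in H by lia.
  rewrite !S_INR in H. pose proof (pos_INR l). nra.
Qed.

(** * The addition theorem for Legendre polynomials *)

Definition fact_ratio (l m : nat) : R := INR (fact (l - m)) / INR (fact (l + m)).

Lemma INR_fact_pos n : 0 < INR (fact n).
Proof. apply lt_0_INR, lt_O_fact. Qed.

Lemma fact_ratio_O l : fact_ratio l 0 = 1.
Proof.
  unfold fact_ratio. rewrite Nat.sub_0_r, Nat.add_0_r.
  pose proof (INR_fact_pos l). field. lra.
Qed.

Lemma fact_ratio_Sl l m : (m <= l)%nat ->
  fact_ratio (S l) m = fact_ratio l m * (INR l + 1 - INR m) / (INR l + 1 + INR m).
Proof.
  intros H. unfold fact_ratio.
  replace (S l - m)%nat with (S (l - m)) by lia.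
  replace (S l + m)%nat with (S (l + m)) by lia.
  rewrite !fact_simpl, !mult_INR, !S_INR, minus_INR, plus_INR by lia.
  pose proof (INR_fact_pos (l - m)). pose proof (INR_fact_pos (l + m)).
  pose proof (pos_INR l). pose proof (pos_INR m).
  field. lra.
Qed.

Lemma fact_ratio_l_Sl l m : (m <= l)%nat ->
  fact_ratio l m = fact_ratio (S l) m * (INR l + 1 + INR m) / (INR l + 1 - INR m).
Proof.
  intros H. rewrite fact_ratio_Sl by exact H. apply le_INR in H. pose proof (pos_INR m).
  field. lra.
Qed.

Lemma fact_ratio_Sm l m : (m < l)%nat ->
  fact_ratio l (S m) = fact_ratio l m / ((INR l - INR m) * (INR l + INR m + 1)).
Proof.
  intros H. unfold fact_ratio.
  replace (l - m)%nat with (S (l - S m)) by lia.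
  replace (l + S m)%nat with (S (l + m)) by lia.
  rewrite !fact_simpl, !mult_INR, !S_INR, !minus_INR, plus_INR, S_INR by lia.
  pose proof (INR_fact_pos (l - S m)). pose proof (INR_fact_pos (l + m)).
  pose proof (pos_INR m). apply lt_INR in H.
  field. lra.
Qed.

Lemma fact_ratio_diag l :
  fact_ratio (S l) (S l) = fact_ratio l l / ((2 * INR l + 1) * (2 * INR l + 2)).
Proof.
  unfold fact_ratio. rewrite !Nat.sub_diag.
  replace (S l + S l)%nat with (S (S (l + l))) by lia.
  rewrite !fact_simpl, !mult_INR, !S_INR, plus_INR.
  pose proof (INR_fact_pos (l + l)). pose proof (pos_INR l). simpl. field. lra.
Qed.

Section Addition.

Variables a b s : R.
Hypothesis Hs : s ^ 2 = (1 - a ^ 2) * (1 - b ^ 2).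

Definition addition_term (l m : nat) : R :=
  fact_ratio l m * s ^ m * LegendreD l m a * LegendreD l m b.

Lemma addition_term_gt l m : (l < m)%nat -> addition_term l m = 0.
Proof. intros H. unfold addition_term. rewrite (LegendreD_gt l m a H). ring. Qed.

Lemma s_mul_addition_term_S l m : s * addition_term l (S m)
  = fact_ratio l (S m) * s ^ m * ((1 - a ^ 2) * LegendreD l (S m) a)
    * ((1 - b ^ 2) * LegendreD l (S m) b).
Proof.
  unfold addition_term.
  transitivity (fact_ratio l (S m) * s ^ m * s ^ 2 * LegendreD l (S m) a * LegendreD l (S m) b).
  - simpl. ring.
  - rewrite Hs. ring.
Qed.

(* The coefficient of cos (m psi) in 2 s cos psi * addition_sum psi l, by
   2 cos psi cos (m psi) = cos ((m+1) psi) + cos ((m-1) psi). *)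
Definition addition_term_nbr (l m : nat) : R :=
  match m with
  | O => 2 * (s * addition_term l 1)
  | S M => s * addition_term l M + s * addition_term l (S (S M))
  end.

Lemma addition_term_rec_O L :
  (INR L + 2) * addition_term (S (S L)) 0 - (2 * INR L + 3) * a * b * addition_term (S L) 0
  + (INR L + 1) * addition_term L 0 = (2 * INR L + 3) / 2 * addition_term_nbr (S L) 0.
Proof.
  unfold addition_term_nbr. rewrite s_mul_addition_term_S, !LegendreD_1_S.
  unfold addition_term. rewrite !LegendreD_SS, (fact_ratio_Sm (S L) 0), !fact_ratio_O by lia.
  rewrite !S_INR. simpl pow. change (INR 0) with 0. pose proof (pos_INR L).
  field. lra.
Qed.

Lemma addition_term_rec_le L M : (S M <= L)%nat ->
  (INR L + 2) * addition_term (S (S L)) (S M) - (2 * INR L + 3) * a * b * addition_term (S L) (S M)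
  + (INR L + 1) * addition_term L (S M) = (2 * INR L + 3) / 2 * addition_term_nbr (S L) (S M).
Proof.
  intros HML. unfold addition_term_nbr. rewrite s_mul_addition_term_S.
  rewrite (LegendreD_ode (S L) M a), (LegendreD_ode (S L) M b).
  unfold addition_term.
  rewrite (LegendreD_S_up (S L) M a), (LegendreD_S_up (S L) M b),
          (LegendreD_S_down L M a), (LegendreD_S_down L M b).
  rewrite (fact_ratio_l_Sl L (S M)), (fact_ratio_Sl (S L) (S M)),
          (fact_ratio_Sm (S L) (S M)), (fact_ratio_Sm (S L) M) by lia.
  apply le_INR in HML. rewrite !S_INR in *. pose proof (pos_INR M).
  simpl pow. field. lra.
Qed.

Lemma addition_term_rec_top L :
  (INR L + 2) * addition_term (S (S L)) (S L) - (2 * INR L + 3) * a * b * addition_term (S L) (S L)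
  + (INR L + 1) * addition_term L (S L) = (2 * INR L + 3) / 2 * addition_term_nbr (S L) (S L).
Proof.
  unfold addition_term_nbr, addition_term.
  rewrite (LegendreD_gt L (S L)), (LegendreD_gt (S L) (S (S L))) by lia.
  rewrite (LegendreD_S_up (S L) L a), (LegendreD_S_up (S L) L b), !LegendreD_pred_diag.
  rewrite (fact_ratio_Sl (S L) (S L)), (fact_ratio_Sm (S L) L) by lia.
  rewrite !S_INR. simpl pow. pose proof (pos_INR L).
  field. lra.
Qed.

Lemma addition_term_rec_top_S L :
  (INR L + 2) * addition_term (S (S L)) (S (S L))
  - (2 * INR L + 3) * a * b * addition_term (S L) (S (S L))
  + (INR L + 1) * addition_term L (S (S L))
  = (2 * INR L + 3) / 2 * addition_term_nbr (S L) (S (S L)).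
Proof.
  unfold addition_term_nbr, addition_term.
  rewrite (LegendreD_gt L (S (S L))), !(LegendreD_gt (S L) (S (S L))),
          !(LegendreD_gt (S L) (S (S (S L)))) by lia.
  rewrite (LegendreD_S_up (S L) (S L) a), (LegendreD_S_up (S L) (S L) b),
          !(LegendreD_gt (S L) (S (S L))) by lia.
  rewrite fact_ratio_diag, !S_INR. simpl pow. pose proof (pos_INR L).
  field. lra.
Qed.

(* Bonnet's recurrence for the right-hand side of the addition theorem, read off
   coefficient by coefficient of cos (m psi). *)
Lemma addition_term_rec L m :
  (INR L + 2) * addition_term (S (S L)) m - (2 * INR L + 3) * a * b * addition_term (S L) m
  + (INR L + 1) * addition_term L m = (2 * INR L + 3) / 2 * addition_term_nbr (S L) m.
Proof.
  destruct m as [|M]; [apply addition_term_rec_O|].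
  destruct (le_lt_dec (S M) L) as [H|H]; [now apply addition_term_rec_le|].
  destruct (Nat.eq_dec M L) as [->|H1]; [apply addition_term_rec_top|].
  destruct (Nat.eq_dec M (S L)) as [->|H2]; [apply addition_term_rec_top_S|].
  unfold addition_term_nbr. rewrite !addition_term_gt by lia. ring.
Qed.

Definition neumann (m : nat) : R := match m with O => 1 | _ => 2 end.

Definition addition_sum (psi : R) (l N : nat) : R :=
  sum_n (fun m => neumann m * addition_term l m * cos (INR m * psi)) N.

Lemma cos_mul_S_rec N psi :
  2 * cos psi * cos (INR (S N) * psi) = cos (INR (S (S N)) * psi) + cos (INR N * psi).
Proof.
  replace (INR (S (S N)) * psi) with (INR (S N) * psi + psi) by (rewrite (S_INR (S N)); ring).
  replace (INR N * psi) with (INR (S N) * psi - psi) by (rewrite (S_INR N); ring).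
  rewrite cos_plus, cos_minus. ring.
Qed.

Lemma addition_sum_rec psi L N :
  (INR L + 2) * addition_sum psi (S (S L)) N - (2 * INR L + 3) * a * b * addition_sum psi (S L) N
  + (INR L + 1) * addition_sum psi L N - (2 * INR L + 3) * s * cos psi * addition_sum psi (S L) N
  = (2 * INR L + 3) * (s * addition_term (S L) (S N) * cos (INR N * psi)
                       - s * addition_term (S L) N * cos (INR (S N) * psi)).
Proof.
  unfold addition_sum. induction N as [|N IH].
  - rewrite !sum_O. pose proof (addition_term_rec L 0) as H. unfold addition_term_nbr in H.
    cbn -[addition_term cos]. rewrite Rmult_0_l, cos_0, !Rmult_1_l. lra.
  - rewrite !sum_Sn_R. cbn -[addition_term cos INR sum_n].
    pose proof (addition_term_rec L (S N)) as H. unfold addition_term_nbr in H.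
    pose proof (cos_mul_S_rec N psi) as Hc.
    set (cN := cos (INR N * psi)) in *. set (c1 := cos (INR (S N) * psi)) in *.
    set (c2 := cos (INR (S (S N)) * psi)) in *.
    apply (f_equal (fun z => 2 * c1 * z)) in H.
    apply (f_equal (fun z => (2 * INR L + 3) * s * addition_term (S L) (S N) * z)) in Hc.
    lra.
Qed.

Lemma addition_sum_ext psi l N : (l <= N)%nat -> addition_sum psi l N = addition_sum psi l l.
Proof.
  intros H. induction H as [|N H IH]; [reflexivity|].
  unfold addition_sum in *. rewrite sum_Sn_R, IH, addition_term_gt by lia. ring.
Qed.

Lemma Legendre_addition psi l : addition_sum psi l l = Legendre l (a * b + s * cos psi).
Proof.
  induction l as [| |L IH0 IH1] using nat_ind2.
  - unfold addition_sum, addition_term, LegendreD. rewrite sum_O, fact_ratio_O.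
    rewrite Legendre_0. simpl. rewrite Rmult_0_l, cos_0. ring.
  - unfold addition_sum, addition_term, LegendreD. rewrite sum_Sn_R, sum_O, fact_ratio_O.
    rewrite Legendre_1. unfold fact_ratio. simpl. rewrite Rmult_0_l, cos_0, !Rmult_1_l. field.
  - pose proof (addition_sum_rec psi L (S (S L))) as H.
    rewrite !addition_term_gt in H by lia.
    rewrite (addition_sum_ext psi (S L) (S (S L))), (addition_sum_ext psi L (S (S L))) in H by lia.
    rewrite IH0, IH1 in H. rewrite Legendre_SS. pose proof (pos_INR L).
    apply (Rmult_eq_reg_l (INR L + 2)); [|lra].
    field_simplify; [|lra]. lra.
Qed.

End Addition.

(** * Chebyshev polynomials in the Legendre basis *)

Lemma GammaHalf_SS j : (1 <= j)%nat -> GammaHalf (S (S j)) = INR j / 2 * GammaHalf j.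
Proof. intros H. destruct j as [|j]; [lia|reflexivity]. Qed.

Lemma GammaHalf_pos j : (1 <= j)%nat -> 0 < GammaHalf j.
Proof.
  intros H. destruct j as [|j]; [lia|]. clear H.
  induction j as [| |j IH0 IH1] using nat_ind2.
  - apply sqrt_lt_R0, PI_RGT_0.
  - simpl. lra.
  - rewrite GammaHalf_SS by lia. apply Rmult_lt_0_compat; [|exact IH0].
    apply Rdiv_lt_0_compat; [apply lt_0_INR; lia | lra].
Qed.

Lemma LambdaHalf_pos j : 0 < LambdaHalf j.
Proof. unfold LambdaHalf. apply Rdiv_lt_0_compat; apply GammaHalf_pos; lia. Qed.

Lemma LambdaHalf_0 : LambdaHalf 0 = sqrt PI.
Proof. unfold LambdaHalf. simpl. field. Qed.

Lemma LambdaHalf_SS j : LambdaHalf (S (S j)) = LambdaHalf j * (INR j + 1) / (INR j + 2).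
Proof.
  unfold LambdaHalf. rewrite (GammaHalf_SS (S j)), (GammaHalf_SS (S (S j))) by lia.
  pose proof (GammaHalf_pos (S j) ltac:(lia)). pose proof (GammaHalf_pos (S (S j)) ltac:(lia)).
  rewrite !S_INR. pose proof (pos_INR j).
  field. repeat split; lra.
Qed.

Lemma LambdaHalf_mul_S j : LambdaHalf j * LambdaHalf (S j) = 2 / (INR j + 1).
Proof.
  unfold LambdaHalf. rewrite (GammaHalf_SS (S j)) by lia.
  pose proof (GammaHalf_pos (S j) ltac:(lia)). pose proof (GammaHalf_pos (S (S j)) ltac:(lia)).
  rewrite !S_INR. pose proof (pos_INR j).
  field. repeat split; lra.
Qed.

Lemma LambdaHalf_S j : LambdaHalf (S j) = 2 / (INR j + 1) / LambdaHalf j.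
Proof.
  pose proof (LambdaHalf_mul_S j). pose proof (LambdaHalf_pos j). pose proof (pos_INR j).
  apply (Rmult_eq_reg_l (LambdaHalf j)); [|lra]. rewrite H. field. lra.
Qed.

Lemma LambdaHalf_S_inv j : LambdaHalf j = 2 / (INR j + 1) / LambdaHalf (S j).
Proof.
  rewrite (LambdaHalf_S j). pose proof (LambdaHalf_pos j). pose proof (pos_INR j).
  field. lra.
Qed.

Lemma Lcoef_0_0 : Lcoef 0 0 = 1.
Proof. reflexivity. Qed.

Lemma Lcoef_diag n : Lcoef (S n) (S n) = sqrt PI / (2 * LambdaHalf (2 * S n)).
Proof. unfold Lcoef. simpl. now rewrite Nat.eqb_refl. Qed.

Lemma Lcoef_1_1 : Lcoef 1 1 = 1.
Proof.
  rewrite Lcoef_diag. simpl Nat.mul. rewrite (LambdaHalf_SS 0), LambdaHalf_0.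
  pose proof (sqrt_lt_R0 PI PI_RGT_0). simpl INR. field. lra.
Qed.

Lemma Lcoef_even n l j : n = (l + 2 * j + 2)%nat -> Lcoef n l =
  - (INR l + 2 * INR j + 2) * (INR l + / 2) / ((2 * INR l + 2 * INR j + 3) * (2 * INR j + 2))
  * LambdaHalf (2 * j) * LambdaHalf (2 * l + 2 * j + 1).
Proof.
  intros ->. unfold Lcoef.
  replace (Nat.eqb (l + 2 * j + 2) 0) with false by (symmetry; apply Nat.eqb_neq; lia).
  replace (Nat.eqb (l + 2 * j + 2) l) with false by (symmetry; apply Nat.eqb_neq; lia).
  replace (Nat.ltb l (l + 2 * j + 2)) with true by (symmetry; apply Nat.ltb_lt; lia).
  replace (Nat.even (l + 2 * j + 2 + l)) with true
    by (replace (l + 2 * j + 2 + l)%nat with (2 * (l + j + 1))%nat by lia;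
        symmetry; apply Nat.even_mul).
  replace (l + 2 * j + 2 - l - 2)%nat with (2 * j)%nat by lia.
  replace (l + 2 * j + 2 + l - 1)%nat with (2 * l + 2 * j + 1)%nat by lia.
  rewrite !plus_INR, !mult_INR. simpl INR. pose proof (pos_INR l). pose proof (pos_INR j).
  simpl. field. lra.
Qed.

Lemma Lcoef_odd n l j : n = (l + 2 * j + 1)%nat -> Lcoef n l = 0.
Proof.
  intros ->. unfold Lcoef.
  replace (Nat.eqb (l + 2 * j + 1) 0) with false by (symmetry; apply Nat.eqb_neq; lia).
  replace (Nat.eqb (l + 2 * j + 1) l) with false by (symmetry; apply Nat.eqb_neq; lia).
  replace (Nat.even (l + 2 * j + 1 + l)) with false
    by (replace (l + 2 * j + 1 + l)%nat with (S (2 * (l + j)))%nat by lia;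
        symmetry; rewrite Nat.even_succ, <- Nat.negb_even, Nat.even_mul; reflexivity).
  simpl. now rewrite Bool.andb_false_r.
Qed.

Lemma Lcoef_gt n l : (n < l)%nat -> Lcoef n l = 0.
Proof.
  intros H. unfold Lcoef.
  replace (Nat.eqb l 0) with false by (symmetry; apply Nat.eqb_neq; lia).
  replace (Nat.eqb n l) with false by (symmetry; apply Nat.eqb_neq; lia).
  replace (Nat.ltb l n) with false by (symmetry; apply Nat.ltb_ge; lia).
  now rewrite !Bool.andb_false_r.
Qed.

(* The coefficients of 2 x (sum_k u_k P_k) in the Legendre basis, by
   (2k+1) x P_k = (k+1) P_{k+1} + k P_{k-1}. *)
Definition xmul_coef (u : nat -> R) (k : nat) : R :=
  2 * INR k / (2 * INR k - 1) * u (pred k) + 2 * (INR k + 1) / (2 * INR k + 3) * u (S k).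

Lemma Lcoef_rec_top N : Lcoef (S (S N)) (S (S N)) + Lcoef N (S (S N))
  = xmul_coef (Lcoef (S N)) (S (S N)).
Proof.
  unfold xmul_coef. simpl pred.
  rewrite (Lcoef_gt (S N) (S (S (S N)))), (Lcoef_gt N (S (S N))), !Lcoef_diag by lia.
  replace (2 * S (S N))%nat with (S (S (2 * S N))) by lia.
  rewrite LambdaHalf_SS. pose proof (LambdaHalf_pos (2 * S N)).
  pose proof (sqrt_lt_R0 PI PI_RGT_0).
  rewrite !S_INR, !mult_INR, !S_INR. simpl INR. pose proof (pos_INR N).
  field. repeat split; lra.
Qed.

Lemma Lcoef_rec_eq k : Lcoef (S (S k)) k + Lcoef k k = xmul_coef (Lcoef (S k)) k.
Proof.
  pose proof (sqrt_lt_R0 PI PI_RGT_0).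
  unfold xmul_coef. destruct k as [|k]; simpl pred.
  - rewrite (Lcoef_even 2 0 0), Lcoef_0_0, Lcoef_1_1 by reflexivity.
    simpl Nat.mul. simpl Nat.add. rewrite LambdaHalf_S, LambdaHalf_0. simpl INR. field. lra.
  - rewrite (Lcoef_even (S (S (S k))) (S k) 0), (Lcoef_even (S (S k)) k 0), !Lcoef_diag by lia.
    replace (2 * 0)%nat with 0%nat by lia.
    replace (2 * S k + 0 + 1)%nat with (S (2 * S k)) by lia.
    replace (2 * k + 0 + 1)%nat with (S (2 * k)) by lia.
    replace (2 * S (S k))%nat with (S (S (2 * S k))) by lia.
    rewrite (LambdaHalf_SS (2 * S k)), (LambdaHalf_S (2 * S k)), LambdaHalf_0.
    rewrite (LambdaHalf_S_inv (S (2 * k))).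
    replace (S (S (2 * k))) with (2 * S k)%nat by lia.
    pose proof (LambdaHalf_pos (2 * S k)).
    rewrite !S_INR, !mult_INR, !S_INR. simpl INR. pose proof (pos_INR k).
    field. repeat split; lra.
Qed.

Lemma Lcoef_rec_lt k j : Lcoef (S (S (k + 2 * S j))) k + Lcoef (k + 2 * S j) k
  = xmul_coef (Lcoef (S (k + 2 * S j))) k.
Proof.
  unfold xmul_coef. pose proof (LambdaHalf_pos (2 * j)). pose proof (pos_INR j).
  destruct k as [|k]; simpl pred.
  - rewrite (Lcoef_even _ 0 (S j)), (Lcoef_even _ 0 j), (Lcoef_odd _ 0 (S j)),
            (Lcoef_even _ 1 j) by lia.
    replace (2 * 0 + 2 * S j + 1)%nat with (S (S (S (2 * j)))) by lia.
    replace (2 * 0 + 2 * j + 1)%nat with (S (2 * j)) by lia.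
    replace (2 * 1 + 2 * j + 1)%nat with (S (S (S (2 * j)))) by lia.
    replace (2 * S j)%nat with (S (S (2 * j))) by lia.
    rewrite (LambdaHalf_SS (2 * j)), (LambdaHalf_SS (S (2 * j))), (LambdaHalf_S (2 * j)).
    rewrite !S_INR, !mult_INR. simpl INR. field. lra.
  - set (q := (2 * k + 2 * j + 3)%nat). pose proof (LambdaHalf_pos q). pose proof (pos_INR k).
    rewrite (Lcoef_even _ (S k) (S j)), (Lcoef_even _ (S k) j), (Lcoef_even _ k (S j)),
            (Lcoef_even _ (S (S k)) j) by lia.
    replace (2 * S k + 2 * S j + 1)%nat with (S (S q)) by lia.
    replace (2 * S k + 2 * j + 1)%nat with q by lia.
    replace (2 * k + 2 * S j + 1)%nat with q by lia.
    replace (2 * S (S k) + 2 * j + 1)%nat with (S (S q)) by lia.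
    replace (2 * S j)%nat with (S (S (2 * j))) by lia.
    rewrite (LambdaHalf_SS (2 * j)), (LambdaHalf_SS q).
    unfold q. rewrite !S_INR, !plus_INR, !mult_INR. simpl INR. field. lra.
Qed.

(* The Chebyshev recurrence T_{N+2} + T_N = 2 x T_{N+1} in the Legendre basis. *)
Lemma Lcoef_rec N k : Lcoef (S (S N)) k + Lcoef N k = xmul_coef (Lcoef (S N)) k.
Proof.
  destruct (le_lt_dec k N) as [Hle|Hgt].
  - destruct (Nat.Even_or_Odd (N - k)) as [[j Hj]|[j Hj]].
    + destruct j as [|j].
      * replace N with k by lia. apply Lcoef_rec_eq.
      * replace N with (k + 2 * S j)%nat by lia. apply Lcoef_rec_lt.
    + unfold xmul_coef.
      rewrite (Lcoef_odd _ k (S j)), (Lcoef_odd _ k j), (Lcoef_odd _ (S k) j) by lia.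
      destruct k as [|k]; [simpl INR; field|].
      rewrite (Lcoef_odd _ k (S j)) by (simpl; lia). ring.
  - destruct (Nat.eq_dec k (S N)) as [->|Hk1].
    + unfold xmul_coef. simpl pred.
      rewrite (Lcoef_odd _ (S N) 0), (Lcoef_odd _ N 0), !(Lcoef_gt _ _) by lia. ring.
    + destruct (Nat.eq_dec k (S (S N))) as [->|Hk2]; [apply Lcoef_rec_top|].
      unfold xmul_coef. rewrite !(Lcoef_gt _ k), !(Lcoef_gt _ (pred k)), (Lcoef_gt _ (S k)) by lia.
      ring.
Qed.

Lemma Legendre_xmul_sum (u : nat -> R) x N :
  sum_n (fun k => xmul_coef u k * Legendre k x) N - 2 * x * sum_n (fun k => u k * Legendre k x) N
  = 2 * (INR N + 1) / (2 * INR N + 3) * u (S N) * Legendre N x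
    - 2 * (INR N + 1) / (2 * INR N + 1) * u N * Legendre (S N) x.
Proof.
  induction N as [|N IH].
  - rewrite !sum_O. unfold xmul_coef. rewrite Legendre_0, Legendre_1. simpl INR. field.
  - rewrite !sum_Sn_R. pose proof (pos_INR N).
    assert (Hx : x * Legendre (S N) x
                 = ((INR N + 2) * Legendre (S (S N)) x + (INR N + 1) * Legendre N x) / (2 * INR N + 3)).
    { rewrite Legendre_SS. field. lra. }
    transitivity (sum_n (fun k => xmul_coef u k * Legendre k x) N
                  - 2 * x * sum_n (fun k => u k * Legendre k x) N
                  + xmul_coef u (S N) * Legendre (S N) x - 2 * u (S N) * (x * Legendre (S N) x)).
    { ring. }
    rewrite IH, Hx. unfold xmul_coef. simpl pred. rewrite !S_INR. field. lra.
Qed.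

Definition Chebyshev (n : nat) (x : R) : R := sum_n (fun l => Lcoef n l * Legendre l x) n.

Lemma Chebyshev_ext n N x : (n <= N)%nat ->
  (sum_n (fun l => Lcoef n l * Legendre l x) N : R) = Chebyshev n x.
Proof.
  intros H. induction H as [|N H IH]; [reflexivity|].
  rewrite sum_Sn_R, IH, Lcoef_gt by lia. ring.
Qed.

Lemma Chebyshev_0 x : Chebyshev 0 x = 1.
Proof. unfold Chebyshev. rewrite sum_O, Lcoef_0_0, Legendre_0. ring. Qed.

Lemma Chebyshev_1 x : Chebyshev 1 x = x.
Proof.
  unfold Chebyshev. rewrite sum_Sn_R, sum_O, Lcoef_1_1, (Lcoef_odd 1 0 0), Legendre_1 by reflexivity.
  ring.
Qed.

Lemma Chebyshev_SS N x : Chebyshev (S (S N)) x = 2 * x * Chebyshev (S N) x - Chebyshev N x.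
Proof.
  pose proof (Legendre_xmul_sum (Lcoef (S N)) x (S (S N))) as H.
  rewrite (Lcoef_gt (S N) (S (S N))), (Lcoef_gt (S N) (S (S (S N)))), Chebyshev_ext in H by lia.
  assert (E : forall k, xmul_coef (Lcoef (S N)) k * Legendre k x
                        = Lcoef (S (S N)) k * Legendre k x + Lcoef N k * Legendre k x).
  { intros k. rewrite <- Lcoef_rec. ring. }
  rewrite (sum_n_ext _ _ _ E) in H.
  assert (Hsplit : (sum_n (fun k => Lcoef (S (S N)) k * Legendre k x + Lcoef N k * Legendre k x)
                           (S (S N)) : R) = Chebyshev (S (S N)) x + Chebyshev N x).
  { rewrite <- (Chebyshev_ext N (S (S N))) by lia. exact (sum_n_plus _ _ _). }
  rewrite Hsplit in H. lra.
Qed.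

Lemma Chebyshev_cos n t : Chebyshev n (cos t) = cos (INR n * t).
Proof.
  induction n as [| |n IH0 IH1] using nat_ind2.
  - rewrite Chebyshev_0. simpl. now rewrite Rmult_0_l, cos_0.
  - rewrite Chebyshev_1. simpl. now rewrite Rmult_1_l.
  - rewrite Chebyshev_SS, IH0, IH1, (S_INR (S n)), (S_INR n).
    replace ((INR n + 1 + 1) * t) with ((INR n + 1) * t + t) by ring.
    replace (INR n * t) with ((INR n + 1) * t - t) by ring.
    rewrite cos_plus, cos_minus. ring.
Qed.

Lemma Chebyshev_bound n c : -1 <= c <= 1 -> Rabs (Chebyshev n c) <= 1.
Proof.
  intros Hc. rewrite <- (cos_acos c), Chebyshev_cos by lra. apply Rabs_le, COS_bound.
Qed.

(** * The logarithmic generating function *)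

Section ChebyshevLog.

Variable c : R.
Hypothesis Hc : -1 <= c <= 1.

Lemma quadratic_ge_sqr s : (1 - Rabs s) ^ 2 <= 1 - 2 * c * s + s ^ 2.
Proof.
  assert (c * s <= Rabs s).
  { destruct (Rle_dec 0 s); [rewrite Rabs_right | rewrite Rabs_left]; nra. }
  rewrite <- (pow2_abs s). nra.
Qed.

Lemma quadratic_pos s : Rabs s < 1 -> 0 < 1 - 2 * c * s + s ^ 2.
Proof.
  intros Hs. pose proof (quadratic_ge_sqr s). assert (0 < (1 - Rabs s) ^ 2) by (apply pow_lt; lra).
  lra.
Qed.

Lemma Chebyshev_generating_partial s N :
  (1 - 2 * c * s + s ^ 2) * sum_n (fun k => Chebyshev (S k) c * s ^ k) N
  = (c - s) - s ^ S N * Chebyshev (S (S N)) c + s ^ S (S N) * Chebyshev (S N) c.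
Proof.
  induction N as [|N IH].
  - rewrite sum_O, Chebyshev_SS, Chebyshev_1, Chebyshev_0. simpl. ring.
  - rewrite sum_Sn_R, Rmult_plus_distr_l, IH, (Chebyshev_SS (S N)). simpl. ring.
Qed.

Definition log_gen (s : R) : R := - / 2 * ln (1 - 2 * c * s + s ^ 2).

Definition log_partial (N : nat) (s : R) : R :=
  sum_n (fun k => Chebyshev (S k) c * s ^ S k / INR (S k)) N.

Lemma is_derive_log_gen s : Rabs s < 1 ->
  is_derive log_gen s ((c - s) / (1 - 2 * c * s + s ^ 2)).
Proof.
  intros Hs. pose proof (quadratic_pos s Hs). unfold log_gen.
  auto_derive; [lra|]. field. lra.
Qed.

Lemma is_derive_log_partial N s :
  is_derive (log_partial N) s (sum_n (fun k => Chebyshev (S k) c * s ^ k) N).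
Proof.
  apply (is_derive_sum_n (fun k s => Chebyshev (S k) c * s ^ S k / INR (S k))).
  intros k _. auto_derive; [auto|].
  destruct k as [|k]; [field|]. pose proof (pos_INR (S k)). field. lra.
Qed.

Lemma log_gen_deriv_error N t x : 0 <= t < 1 -> Rabs x <= t ->
  Rabs ((c - x) / (1 - 2 * c * x + x ^ 2) - sum_n (fun k => Chebyshev (S k) c * x ^ k) N)
  <= 2 * t ^ S N / (1 - t) ^ 2.
Proof.
  intros Ht Hx. pose proof (quadratic_pos x ltac:(lra)) as HD.
  replace ((c - x) / (1 - 2 * c * x + x ^ 2) - sum_n (fun k => Chebyshev (S k) c * x ^ k) N)
    with ((x ^ S N * Chebyshev (S (S N)) c - x ^ S (S N) * Chebyshev (S N) c)
          / (1 - 2 * c * x + x ^ 2)).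
  2:{ apply (Rmult_eq_reg_l (1 - 2 * c * x + x ^ 2)); [|lra].
      rewrite Rmult_minus_distr_l, Chebyshev_generating_partial. field. lra. }
  rewrite Rabs_div, (Rabs_right (1 - 2 * c * x + x ^ 2)) by lra.
  assert (Hnum : Rabs (x ^ S N * Chebyshev (S (S N)) c - x ^ S (S N) * Chebyshev (S N) c)
                 <= 2 * t ^ S N).
  { pose proof (Chebyshev_bound (S N) c Hc). pose proof (Chebyshev_bound (S (S N)) c Hc).
    pose proof (Rabs_pos (Chebyshev (S N) c)). pose proof (Rabs_pos (Chebyshev (S (S N)) c)).
    assert (Hp : Rabs x ^ S N <= t ^ S N) by (apply pow_incr; split; [apply Rabs_pos | lra]).
    assert (Hp' : Rabs x ^ S (S N) <= Rabs x ^ S N).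
    { pose proof (pow_le (Rabs x) (S N) (Rabs_pos x)).
      rewrite <- (tech_pow_Rmult (Rabs x) (S N)). nra. }
    pose proof (pow_le (Rabs x) (S (S N)) (Rabs_pos x)).
    unfold Rminus. eapply Rle_trans; [apply Rabs_triang|].
    rewrite Rabs_Ropp, !Rabs_mult, <- !RPow_abs. nra. }
  assert (Hden : (1 - t) ^ 2 <= 1 - 2 * c * x + x ^ 2).
  { pose proof (quadratic_ge_sqr x). assert (0 <= 1 - t <= 1 - Rabs x) by lra. nra. }
  assert (0 < (1 - t) ^ 2) by (apply pow_lt; lra).
  unfold Rdiv. apply Rmult_le_compat; try lra; [apply Rabs_pos | |].
  - left. apply Rinv_0_lt_compat. lra.
  - apply Rinv_le_contravar; lra.
Qed.

Lemma log_partial_error N t : 0 <= t < 1 ->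
  Rabs (log_gen t - log_partial N t) <= t * (2 * t ^ S N / (1 - t) ^ 2).
Proof.
  intros Ht.
  destruct (MVT_cor4 (fun s => log_gen s - log_partial N s)
              (fun s => (c - s) / (1 - 2 * c * s + s ^ 2)
                        - sum_n (fun k => Chebyshev (S k) c * s ^ k) N) 0 t)
    with (b := t) as [x [Hx1 Hx2]].
  - intros x Hx. rewrite Rminus_0_r in Hx.
    apply (is_derive_minus log_gen (log_partial N));
      [apply is_derive_log_gen; lra | apply is_derive_log_partial].
  - rewrite Rminus_0_r, Rabs_right; lra.
  - rewrite !Rminus_0_r, (Rabs_right t) in * by lra.
    assert (H0 : log_gen 0 - log_partial N 0 = 0).
    { unfold log_gen, log_partial. replace (1 - 2 * c * 0 + 0 ^ 2) with 1 by ring.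
      rewrite ln_1, (sum_n_ext _ (fun _ => zero)).
      - unfold sum_n. rewrite sum_n_m_const_zero. unfold zero. simpl. ring.
      - intros k. rewrite pow_i by lia. unfold zero. simpl. unfold Rdiv. ring. }
    rewrite H0, Rminus_0_r in Hx1. rewrite Hx1, Rabs_mult, (Rabs_right t), Rmult_comm by lra.
    apply Rmult_le_compat_l; [lra|]. apply log_gen_deriv_error; lra.
Qed.

Lemma Chebyshev_log_series t : 0 <= t < 1 ->
  is_series (fun k => Chebyshev (S k) c * t ^ S k / INR (S k)) (log_gen t).
Proof.
  intros Ht. set (K := 2 * t ^ 2 / (1 - t) ^ 2).
  assert (Hgeom : forall K', is_lim_seq (fun N => K' * t ^ N) 0).
  { intros K'. replace (Finite 0) with (Rbar_mult K' 0) by (simpl; f_equal; ring).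
    apply is_lim_seq_scal_l, is_lim_seq_geom. rewrite Rabs_right; lra. }
  assert (Herr : is_lim_seq (fun N => log_gen t - log_partial N t) 0).
  { apply (is_lim_seq_le_le (fun N => - K * t ^ N) _ (fun N => K * t ^ N)); [|apply Hgeom..].
    intros N. pose proof (log_partial_error N t Ht) as B.
    replace (t * (2 * t ^ S N / (1 - t) ^ 2)) with (K * t ^ N) in B by (unfold K; simpl; field; lra).
    apply Rabs_le_between in B. lra. }
  assert (Hlim : is_lim_seq (fun N => log_partial N t) (log_gen t)).
  { apply (is_lim_seq_ext (fun N => log_gen t - (log_gen t - log_partial N t))); [intros; ring|].
    replace (Finite (log_gen t)) with (Rbar_minus (log_gen t) 0) by (simpl; f_equal; ring).
    apply is_lim_seq_minus'; [apply is_lim_seq_const | exact Herr]. }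
  exact Hlim.
Qed.

End ChebyshevLog.

(** * Spherical harmonics *)

Lemma sum_n_RtoC (f : nat -> R) N : sum_n (fun k => RtoC (f k)) N = RtoC (sum_n f N).
Proof.
  induction N as [|N IH]; [now rewrite !sum_O|].
  rewrite !sum_Sn, IH. apply injective_projections; simpl; unfold plus; simpl; ring.
Qed.

Lemma is_series_RtoC (a : nat -> R) l : is_series a l -> is_series (fun k => RtoC (a k)) (RtoC l).
Proof.
  intros H. unfold is_series in *.
  apply filterlim_ext with (fun N => RtoC (sum_n a N)); [intros; now rewrite sum_n_RtoC|].
  apply filterlim_locally. intros eps.
  eapply filter_imp; [|exact (proj1 (filterlim_locally _ _) H eps)].
  intros N HN. split; [exact HN | apply ball_center].
Qed.

Lemma sum_n_S_front {G : AbelianMonoid} (f : nat -> G) n :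
  sum_n f (S n) = plus (f 0%nat) (sum_n (fun k => f (S k)) n).
Proof. unfold sum_n. rewrite sum_Sn_m, sum_n_m_S by lia. reflexivity. Qed.

Lemma sum_m_ext l (f g : Z -> C) : (forall m, f m = g m) -> sum_m l f = sum_m l g.
Proof. intros H. apply sum_n_ext. intros k. apply H. Qed.

Lemma sum_m_mult_l l (a : C) (g : Z -> C) : sum_m l (fun m => a * g m)%C = (a * sum_m l g)%C.
Proof. exact (sum_n_mult_l a _ _). Qed.

Definition sum_m_fold_term (g : Z -> C) (k : nat) : C :=
  match k with O => g 0%Z | S _ => (g (Z.of_nat k) + g (- Z.of_nat k)%Z)%C end.

Lemma sum_m_fold l (g : Z -> C) : sum_m l g = sum_n (sum_m_fold_term g) l.
Proof.
  unfold sum_m. induction l as [|l IH]; [reflexivity|].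
  replace (2 * S l)%nat with (S (S (2 * l))) by lia.
  rewrite sum_Sn, sum_n_S_front, (sum_Sn (sum_m_fold_term g)), <- IH.
  rewrite (sum_n_ext (fun k => g (Z.of_nat (S k) - Z.of_nat (S l))%Z)
                     (fun k => g (Z.of_nat k - Z.of_nat l)%Z)) by (intros k; f_equal; lia).
  simpl sum_m_fold_term.
  replace (Z.of_nat 0 - Z.of_nat (S l))%Z with (- Z.of_nat (S l))%Z by lia.
  replace (Z.of_nat (S (S (2 * l))) - Z.of_nat (S l))%Z with (Z.of_nat (S l)) by lia.
  apply injective_projections; simpl; ring.
Qed.

Lemma sqrt_1_minus_cos_sqr th : 0 <= th <= PI -> sqrt (1 - cos th ^ 2) = sin th.
Proof.
  intros H. pose proof (sin2_cos2 th). unfold Rsqr in *.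
  apply sqrt_lem_1; [nra | apply sin_ge_0; lra | nra].
Qed.

Definition cos_angle (th ph th' ph' : R) : R :=
  cos th * cos th' + sin th * sin th' * cos (ph - ph').

Lemma cos_angle_bound th ph th' ph' : 0 <= th <= PI -> 0 <= th' <= PI ->
  -1 <= cos_angle th ph th' ph' <= 1.
Proof.
  intros H1 H2. unfold cos_angle.
  pose proof (sin_ge_0 th ltac:(lra) ltac:(lra)). pose proof (sin_ge_0 th' ltac:(lra) ltac:(lra)).
  pose proof (COS_bound (ph - ph')). pose proof (COS_bound (th - th')). pose proof (COS_bound (th + th')).
  rewrite cos_minus, cos_plus in *.
  assert (0 <= sin th * sin th') by (apply Rmult_le_pos; lra).
  split; nra.
Qed.

Lemma cos_angle_diag th ph : cos_angle th ph th ph = 1.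
Proof.
  unfold cos_angle. rewrite Rminus_diag, cos_0. pose proof (sin2_cos2 th). unfold Rsqr in *. lra.
Qed.

Lemma assocLegendre_mul l k a b : assocLegendre l k a * assocLegendre l k b
  = (sqrt (1 - a ^ 2) * sqrt (1 - b ^ 2)) ^ k * LegendreD l k a * LegendreD l k b.
Proof.
  unfold assocLegendre. rewrite !Derive_n_Legendre, Rpow_mult_distr.
  assert (Hsign : (-1) ^ k * (-1) ^ k = 1).
  { rewrite <- Rpow_mult_distr. replace (-1 * -1) with 1 by ring. apply pow1. }
  transitivity ((-1) ^ k * (-1) ^ k * (sqrt (1 - a ^ 2) ^ k * sqrt (1 - b ^ 2) ^ k
                                      * LegendreD l k a * LegendreD l k b)); [ring|].
  rewrite Hsign. ring.
Qed.

Lemma Ylm_conj_mul l m th ph th' ph' : 0 <= th <= PI -> 0 <= th' <= PI ->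
  (Cconj (Ylm l m th' ph') * Ylm l m th ph)%C
  = (RtoC ((2 * INR l + 1) / (4 * PI)
           * addition_term (cos th) (cos th') (sin th * sin th') l (Z.abs_nat m))
     * (cos (IZR m * (ph - ph')), sin (IZR m * (ph - ph'))))%C.
Proof.
  intros Hth Hth'. unfold Ylm. cbv zeta. set (k := Z.abs_nat m).
  set (N := sqrt ((2 * INR l + 1) / (4 * PI) * (INR (fact (l - k)) / INR (fact (l + k))))).
  replace ((2 * INR l + 1) / (4 * PI) * addition_term (cos th) (cos th') (sin th * sin th') l k)
    with (N * assocLegendre l k (cos th') * (N * assocLegendre l k (cos th))).
  { unfold Cconj, Cmult, RtoC. simpl.
    replace (IZR m * (ph - ph')) with (IZR m * ph - IZR m * ph') by ring.
    rewrite cos_minus, sin_minus. apply injective_projections; simpl; ring. }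
  assert (HN : N * N = (2 * INR l + 1) / (4 * PI) * fact_ratio l k).
  { apply sqrt_sqrt. pose proof (pos_INR l). pose proof PI_RGT_0.
    pose proof (INR_fact_pos (l - k)). pose proof (INR_fact_pos (l + k)).
    apply Rmult_le_pos; apply Rdiv_le_0_compat; lra. }
  transitivity (N * N * (assocLegendre l k (cos th) * assocLegendre l k (cos th'))); [ring|].
  rewrite HN, assocLegendre_mul, !sqrt_1_minus_cos_sqr by assumption.
  unfold addition_term. ring.
Qed.

Lemma Ylm_addition l th ph th' ph' : 0 <= th <= PI -> 0 <= th' <= PI ->
  sum_m l (fun m => Cconj (Ylm l m th' ph') * Ylm l m th ph)%C
  = RtoC ((2 * INR l + 1) / (4 * PI) * Legendre l (cos_angle th ph th' ph')).
Proof.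
  intros Hth Hth'.
  assert (Hs : (sin th * sin th') ^ 2 = (1 - cos th ^ 2) * (1 - cos th' ^ 2)).
  { pose proof (sin2_cos2 th). pose proof (sin2_cos2 th'). unfold Rsqr in *. nra. }
  unfold cos_angle. rewrite <- (Legendre_addition _ _ _ Hs), sum_m_fold. unfold addition_sum.
  assert (E : forall k, sum_m_fold_term (fun m => Cconj (Ylm l m th' ph') * Ylm l m th ph)%C k
    = RtoC ((2 * INR l + 1) / (4 * PI) * (neumann k
            * addition_term (cos th) (cos th') (sin th * sin th') l k * cos (INR k * (ph - ph'))))).
  { intros [|k]; unfold sum_m_fold_term; cbv beta iota; rewrite !Ylm_conj_mul by assumption.
    - simpl. rewrite !Rmult_0_l, cos_0, sin_0. apply injective_projections; simpl; ring.
    - replace (Z.abs_nat (Z.of_nat (S k))) with (S k) by lia.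
      replace (Z.abs_nat (- Z.of_nat (S k))) with (S k) by lia.
      rewrite opp_IZR, <- INR_IZR_INZ, Ropp_mult_distr_l_reverse, cos_neg, sin_neg.
      apply injective_projections; simpl; ring. }
  rewrite (sum_n_ext _ _ _ E), sum_n_RtoC. f_equal. exact (sum_n_mult_l _ _ _).
Qed.

Definition Qcoef (th' ph' : R) (l : nat) (m : Z) : C :=
  (RtoC (sqrt (4 * PI / (2 * INR l + 1))) * Cconj (Ylm l m th' ph'))%C.

Lemma harmonic_weight_sqr l : sqrt (4 * PI / (2 * INR l + 1)) ^ 2 = 4 * PI / (2 * INR l + 1).
Proof.
  apply pow2_sqrt, Rdiv_le_0_compat; [pose proof PI_RGT_0 | pose proof (pos_INR l)]; lra.
Qed.

Lemma Qcoef_norm th' ph' l : 0 <= th' <= PI ->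
  sum_m l (fun m => RtoC (Cmod (Qcoef th' ph' l m) ^ 2)) = RtoC 1.
Proof.
  intros Hth'.
  assert (E : forall m, RtoC (Cmod (Qcoef th' ph' l m) ^ 2)
    = (RtoC (4 * PI / (2 * INR l + 1)) * (Cconj (Ylm l m th' ph') * Ylm l m th' ph'))%C).
  { intros m. unfold Qcoef.
    rewrite Cmod_mult, Cmod_R, Cmod_conj, Rpow_mult_distr, pow2_abs, harmonic_weight_sqr.
    rewrite RtoC_mult, Cmod2_conj. ring. }
  rewrite (sum_m_ext _ _ _ E), sum_m_mult_l, Ylm_addition, cos_angle_diag, Legendre_at_1, <- RtoC_mult by assumption.
  f_equal. pose proof PI_RGT_0. pose proof (pos_INR l). field. lra.
Qed.

Lemma Qcoef_Ylm_sum l th ph th' ph' : 0 <= th <= PI -> 0 <= th' <= PI ->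
  (RtoC (sqrt (4 * PI / (2 * INR l + 1)))
   * sum_m l (fun m => Qcoef th' ph' l m * Ylm l m th ph))%C
  = RtoC (Legendre l (cos_angle th ph th' ph')).
Proof.
  intros Hth Hth'. unfold Qcoef.
  set (w := sqrt (4 * PI / (2 * INR l + 1))).
  rewrite (sum_m_ext l _ (fun m => RtoC w * (Cconj (Ylm l m th' ph') * Ylm l m th ph))%C)
    by (intros m; ring).
  rewrite sum_m_mult_l, Ylm_addition, <- !RtoC_mult by assumption. f_equal.
  transitivity (w ^ 2 * (2 * INR l + 1) / (4 * PI) * Legendre l (cos_angle th ph th' ph')).
  - simpl. field. pose proof PI_RGT_0. lra.
  - unfold w. rewrite harmonic_weight_sqr. pose proof PI_RGT_0. pose proof (pos_INR l).
    field. lra.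
Qed.

(** * Spherical coordinates and the main theorem *)

Lemma polar_coords (u v : R) :
  exists ph, u = sqrt (u ^ 2 + v ^ 2) * cos ph /\ v = sqrt (u ^ 2 + v ^ 2) * sin ph.
Proof.
  set (rho := sqrt (u ^ 2 + v ^ 2)).
  assert (Hrho2 : rho * rho = u ^ 2 + v ^ 2) by (apply sqrt_sqrt; nra).
  assert (Hrho0 : 0 <= rho) by apply sqrt_pos.
  destruct (Req_dec rho 0) as [H0|H0].
  { exists 0. rewrite H0 in *. split; nra. }
  assert (Hb : -1 <= u / rho <= 1).
  { split; apply (Rmult_le_reg_r rho); try lra; field_simplify; nra. }
  assert (Hs : sqrt (1 - (u / rho)²) = Rabs v / rho).
  { apply sqrt_lem_1.
    - unfold Rsqr. assert ((u / rho) * (u / rho) <= 1) by (destruct Hb; nra). lra.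
    - apply Rdiv_le_0_compat; [apply Rabs_pos | lra].
    - assert (HA : Rabs v * Rabs v = v * v) by (rewrite <- Rabs_mult; apply Rabs_right; nra).
      unfold Rsqr. transitivity (Rabs v * Rabs v / (rho * rho)); [field; lra|].
      rewrite HA. replace (v * v) with (rho * rho - u ^ 2) by (simpl in Hrho2; lra).
      field. lra. }
  destruct (Rle_dec 0 v) as [Hv|Hv].
  - exists (acos (u / rho)). rewrite cos_acos, sin_acos, Hs, Rabs_right by (assumption || lra).
    split; field; lra.
  - exists (- acos (u / rho)). rewrite cos_neg, sin_neg, cos_acos, sin_acos, Hs, Rabs_left
      by (assumption || lra).
    split; field; lra.
Qed.

Lemma norm3_nonneg v : 0 <= norm3 v.
Proof. destruct v as [[a b] c]. apply sqrt_pos. Qed.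

Lemma spherical_coords (y : R * R * R) : exists th ph, 0 <= th <= PI /\ y = sph (norm3 y) th ph.
Proof.
  destruct y as [[y1 y2] y3]. unfold norm3. set (r := sqrt (y1 ^ 2 + y2 ^ 2 + y3 ^ 2)).
  destruct (polar_coords y1 y2) as [ph [H1 H2]]. set (rho := sqrt (y1 ^ 2 + y2 ^ 2)) in *.
  assert (Hr2 : r * r = y1 ^ 2 + y2 ^ 2 + y3 ^ 2) by (apply sqrt_sqrt; nra).
  assert (Hrho2 : rho * rho = y1 ^ 2 + y2 ^ 2) by (apply sqrt_sqrt; nra).
  assert (Hr0 : 0 <= r) by apply sqrt_pos. assert (Hrho0 : 0 <= rho) by apply sqrt_pos.
  destruct (Req_dec r 0) as [H0|H0].
  { exists 0, ph. split; [pose proof PI_RGT_0; lra|].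
    unfold sph. rewrite H0 in *. repeat f_equal; nra. }
  assert (Hb : -1 <= y3 / r <= 1).
  { split; apply (Rmult_le_reg_r r); try lra; field_simplify; nra. }
  assert (Hsin : r * sin (acos (y3 / r)) = rho).
  { rewrite sin_acos by exact Hb.
    replace (sqrt (1 - (y3 / r)²)) with (rho / r); [field; lra|].
    symmetry. apply sqrt_lem_1.
    - unfold Rsqr. assert ((y3 / r) * (y3 / r) <= 1) by (destruct Hb; nra). lra.
    - apply Rdiv_le_0_compat; lra.
    - unfold Rsqr. transitivity (rho * rho / (r * r)); [field; lra|].
      rewrite Hrho2. replace (y1 ^ 2 + y2 ^ 2) with (r * r - y3 ^ 2) by lra. field. lra. }
  exists (acos (y3 / r)), ph. split; [apply acos_bound|].
  unfold sph. rewrite Hsin, cos_acos by exact Hb.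
  repeat f_equal; [lra | lra | field; lra].
Qed.

Lemma norm3_sub_sph R r th ph th' ph' :
  norm3 (sub3 (sph R th ph) (sph r th' ph'))
  = sqrt (R ^ 2 - 2 * R * r * cos_angle th ph th' ph' + r ^ 2).
Proof.
  unfold norm3, sub3, sph, cos_angle. f_equal. rewrite cos_minus.
  pose proof (sin2_cos2 th) as A1. pose proof (sin2_cos2 ph) as A2.
  pose proof (sin2_cos2 th') as A3. pose proof (sin2_cos2 ph') as A4. unfold Rsqr in *.
  assert (B1 : R ^ 2 * (sin th * sin th) * (sin ph * sin ph + cos ph * cos ph)
               = R ^ 2 * (sin th * sin th)) by (rewrite A2; ring).
  assert (B2 : R ^ 2 * (sin th * sin th + cos th * cos th) = R ^ 2) by (rewrite A1; ring).
  assert (B3 : r ^ 2 * (sin th' * sin th') * (sin ph' * sin ph' + cos ph' * cos ph')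
               = r ^ 2 * (sin th' * sin th')) by (rewrite A4; ring).
  assert (B4 : r ^ 2 * (sin th' * sin th' + cos th' * cos th') = r ^ 2) by (rewrite A3; ring).
  lra.
Qed.

Lemma ln_sqrt x : 0 < x -> ln (sqrt x) = ln x / 2.
Proof.
  intros H. pose proof (sqrt_lt_R0 x H).
  assert (ln x = ln (sqrt x) + ln (sqrt x)) by (rewrite <- ln_mult, sqrt_sqrt; lra).
  lra.
Qed.

Lemma Rdiv_unit_interval r R : 0 <= r < R -> 0 <= r / R < 1.
Proof.
  intros H. split; [apply Rdiv_le_0_compat; lra|].
  apply (Rmult_lt_reg_r R); [lra|]. field_simplify; lra.
Qed.

Lemma ln_dist_sph Rr r th ph th' ph' : 0 <= r < Rr -> 0 <= th <= PI -> 0 <= th' <= PI ->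
  ln Rr - ln (norm3 (sub3 (sph Rr th ph) (sph r th' ph')))
  = log_gen (cos_angle th ph th' ph') (r / Rr).
Proof.
  intros Hr Hth Hth'. set (c := cos_angle th ph th' ph'). set (t := r / Rr).
  assert (Ht : 0 <= t < 1) by (apply Rdiv_unit_interval; lra).
  assert (HD : 0 < 1 - 2 * c * t + t ^ 2)
    by (apply (quadratic_pos c (cos_angle_bound _ _ _ _ Hth Hth')); rewrite Rabs_right; lra).
  rewrite norm3_sub_sph. fold c.
  replace (Rr ^ 2 - 2 * Rr * r * c + r ^ 2) with (Rr ^ 2 * (1 - 2 * c * t + t ^ 2))
    by (unfold t; field; lra).
  rewrite ln_sqrt, ln_mult, ln_pow by (try apply Rmult_lt_0_compat; try apply pow_lt; lra).
  unfold log_gen. simpl INR. field.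
Qed.

Lemma harmonic_series_term n Rr r th ph th' ph' : Rr <> 0 -> 0 <= th <= PI -> 0 <= th' <= PI ->
  Cmult (RtoC (r ^ n / INR n / Rr ^ n))
    (sum_n (fun l => Cmult (RtoC (Lcoef n l * sqrt (4 * PI / (2 * INR l + 1))))
                           (sum_m l (fun m => Cmult (Qcoef th' ph' l m) (Ylm l m th ph)))) n)
  = RtoC (Chebyshev n (cos_angle th ph th' ph') * (r / Rr) ^ n / INR n).
Proof.
  intros HR Hth Hth'.
  assert (E : forall l, Cmult (RtoC (Lcoef n l * sqrt (4 * PI / (2 * INR l + 1))))
                          (sum_m l (fun m => Cmult (Qcoef th' ph' l m) (Ylm l m th ph)))
                        = RtoC (Lcoef n l * Legendre l (cos_angle th ph th' ph'))).
  { intros l. rewrite !RtoC_mult, <- Qcoef_Ylm_sum by assumption. ring. }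
  rewrite (sum_n_ext _ _ _ E), sum_n_RtoC, <- RtoC_mult. f_equal.
  unfold Chebyshev, Rdiv. rewrite Rpow_mult_distr, pow_inv. ring.
Qed.

Theorem mainTheorem4 :
  forall y : R * R * R,
  exists Q : nat -> Z -> C,
    (forall l : nat, sum_m l (fun m => RtoC (Cmod (Q l m) ^ 2)) = RtoC 1) /\
    (forall Rr theta phi : R,
       0 <= theta <= PI -> 0 <= phi < 2 * PI -> Rr > norm3 y ->
       is_series
         (fun k : nat =>
            let n := S k in
            Cmult (RtoC (norm3 y ^ n / INR n / Rr ^ n))
              (sum_n (fun l : nat =>
                        Cmult (RtoC (Lcoef n l * sqrt (4 * PI / (2 * INR l + 1))))
                              (sum_m l (fun m => Cmult (Q l m) (Ylm l m theta phi)))) n))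
         (RtoC (ln Rr - ln (norm3 (sub3 (sph Rr theta phi) y))))).
Proof.
  intros y. destruct (spherical_coords y) as [th' [ph' [Hth' Hy]]].
  exists (Qcoef th' ph'). split; [intros l; now apply Qcoef_norm|].
  intros Rr th ph Hth _ HR. set (r := norm3 y) in *.
  assert (Hr : 0 <= r) by apply norm3_nonneg.
  assert (Ht : 0 <= r / Rr < 1) by (apply Rdiv_unit_interval; lra).
  rewrite Hy, ln_dist_sph by lra.
  apply (is_series_ext (fun k => RtoC (Chebyshev (S k) (cos_angle th ph th' ph')
                                        * (r / Rr) ^ S k / INR (S k)))).
  - intros k. symmetry. apply harmonic_series_term; lra.
  - apply is_series_RtoC, Chebyshev_log_series; [apply cos_angle_bound | ]; assumption.
Qed.
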